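(* Let $\kappa\in[0,1)$. There exists a unique solution $x\in(0,K(\kappa))$ of the equation $$\kappa'\,\mathrm{sc}_\kappa(x)-\mathrm{dc}_\kappa(x)+2\kappa'\,\mathrm{nc}_\kappa(x)=0$$ if and only if $\kappa\in\left(\tfrac{\sqrt3}{2},1\right)$ (and for $\kappa\notin(\tfrac{\sqrt3}{2},1)$ there is no solution in $(0,K(\kappa))$).
   Context: $\kappa'=\sqrt{1-\kappa^2}$; $\mathrm{sn}_\kappa,\mathrm{cn}_\kappa,\mathrm{dn}_\kappa$ are the Jacobi elliptic functions with modulus $\kappa$, with $\mathrm{sc}=\mathrm{sn}/\mathrm{cn}$, $\mathrm{nc}=1/\mathrm{cn}$, $\mathrm{dc}=\mathrm{dn}/\mathrm{cn}$. $K(\kappa)=\int_0^{\pi/2}(1-\kappa^2\sin^2\theta)^{-1/2}d\theta$ is the complete elliptic integral of the first kind. *)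

From Stdlib Require Import Reals Lra ClassicalEpsilon.
From Coquelicot Require Import Coquelicot.
Open Scope R_scope.

Definition ellF (k phi : R) : R :=
  RInt (fun t => / sqrt (1 - k ^ 2 * sin t ^ 2)) 0 phi.

Definition ellK (k : R) : R := ellF k (PI / 2).

Definition kprime (k : R) : R := sqrt (1 - k ^ 2).

(* Jacobi amplitude: the (unique, for 0 <= k < 1) phi with F(phi|k) = x *)
Definition am (k x : R) : R :=
  epsilon (inhabits 0) (fun phi => ellF k phi = x).

Definition sn (k x : R) : R := sin (am k x).
Definition cn (k x : R) : R := cos (am k x).
Definition dn (k x : R) : R := sqrt (1 - k ^ 2 * sn k x ^ 2).

Definition sc (k x : R) : R := sn k x / cn k x.
Definition nc (k x : R) : R := / cn k x.
Definition dc (k x : R) : R := dn k x / cn k x.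

(* On (0, K) we have cn > 0 and 0 < sn < 1, so after multiplying by cn the
   equation reads k' (sn + 2) = dn = sqrt (1 - k^2 sn^2).  Squaring gives
   (sn + 1) (sn + 3 - 4 k^2) = 0, i.e. the equation is equivalent to
   sn x = 4 k^2 - 3.  The amplitude maps (0, K) bijectively onto (0, pi/2),
   so sn maps (0, K) bijectively onto (0, 1): there is exactly one solution
   when 0 < 4 k^2 - 3 < 1, i.e. when sqrt 3 / 2 < k < 1, and none otherwise. *)

From Stdlib Require Import Reals Lra ClassicalEpsilon.
From Coquelicot Require Import Coquelicot.
Open Scope R_scope.

Lemma sin_cos_quarter_bounds p : 0 < p < PI / 2 -> 0 < sin p < 1 /\ 0 < cos p.
Proof.
  intro hp. pose proof PI_RGT_0.
  assert (hs : 0 < sin p) by (apply sin_gt_0; lra).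
  assert (hc : 0 < cos p) by (apply cos_gt_0; lra).
  pose proof (sin2_cos2 p). unfold Rsqr in *. nra.
Qed.

Lemma sin_quarter_exists_unique s :
  0 < s < 1 -> exists! p, 0 < p < PI / 2 /\ sin p = s.
Proof.
  intro hs. exists (asin s). split; [split|].
  - pose proof (asin_bound_lt s ltac:(lra)) as hb. split; [|lra].
    destruct (Rlt_or_le 0 (asin s)) as [h|h]; auto.
    assert (0 <= sin (- asin s)) by (apply sin_ge_0; lra).
    rewrite sin_neg, sin_asin in * by lra. lra.
  - apply sin_asin. lra.
  - intros q [hq <-]. rewrite asin_sin by lra. reflexivity.
Qed.

Lemma kprime_mul_eq_sqrt_iff k s : k ^ 2 <= 1 -> -1 < s <= 1 ->
  kprime k * (s + 2) = sqrt (1 - k ^ 2 * s ^ 2) <-> s = 4 * k ^ 2 - 3.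
Proof.
  intros hk hs.
  assert (hsq : kprime k * (s + 2) = sqrt ((1 - k ^ 2) * (s + 2) ^ 2)).
  { unfold kprime. rewrite sqrt_mult, sqrt_pow2 by (lra || nra). reflexivity. }
  rewrite hsq. split.
  - intro h. apply sqrt_inj in h; [|nra|nra].
    assert (hfac : (s + 1) * (s - (4 * k ^ 2 - 3)) = 0) by lra.
    apply Rmult_integral in hfac. lra.
  - intros ->. f_equal. ring.
Qed.

Lemma sqrt3_half_lt_iff k : 0 <= k -> sqrt 3 / 2 < k <-> 3 < 4 * k ^ 2.
Proof.
  intro hk. assert (h2k : sqrt (4 * k ^ 2) = 2 * k).
  { replace (4 * k ^ 2) with ((2 * k) ^ 2) by ring. apply sqrt_pow2. lra. }
  split.
  - intro h. apply sqrt_lt_0_alt. rewrite h2k. lra.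
  - intro h. assert (sqrt 3 < sqrt (4 * k ^ 2)) by (apply sqrt_lt_1_alt; lra). lra.
Qed.

Section Amplitude.

Variable k : R.
Hypothesis hk : k ^ 2 < 1.

Let integrand (t : R) : R := / sqrt (1 - k ^ 2 * sin t ^ 2).

Lemma ellF_radicand_pos t : 0 < 1 - k ^ 2 * sin t ^ 2.
Proof. pose proof (SIN_bound t). assert (sin t ^ 2 <= 1) by nra. nra. Qed.

Lemma integrand_pos t : 0 < integrand t.
Proof. apply Rinv_0_lt_compat, sqrt_lt_R0, ellF_radicand_pos. Qed.

Lemma integrand_continuous t : continuous integrand t.
Proof.
  apply (ex_derive_continuous (V := R_NormedModule)).
  pose proof (ellF_radicand_pos t). unfold integrand. auto_derive.
  repeat split; [lra|]. apply Rgt_not_eq, sqrt_lt_R0. lra.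
Qed.

Lemma ex_RInt_integrand a b : ex_RInt integrand a b.
Proof.
  apply (ex_RInt_continuous (V := R_CompleteNormedModule)).
  intros; apply integrand_continuous.
Qed.

Lemma ellF_0 : ellF k 0 = 0.
Proof. unfold ellF. rewrite RInt_point. reflexivity. Qed.

Lemma ellF_increasing a b : a < b -> ellF k a < ellF k b.
Proof.
  intro hab. unfold ellF. fold integrand.
  rewrite <- (RInt_Chasles integrand 0 a b) by apply ex_RInt_integrand.
  assert (0 < RInt integrand a b).
  { apply RInt_gt_0; auto using integrand_pos, integrand_continuous. }
  simpl. unfold plus; simpl. lra.
Qed.

Lemma ellF_injective a b : ellF k a = ellF k b -> a = b.
Proof.
  intro h. destruct (Rtotal_order a b) as [hab|[hab|hab]]; auto;
    apply ellF_increasing in hab; lra.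
Qed.

Lemma ellF_continuous : continuity (ellF k).
Proof.
  intro x. apply continuity_pt_filterlim, (ex_derive_continuous (V := R_NormedModule)).
  exists (integrand x). unfold ellF. fold integrand.
  apply (is_derive_RInt integrand (fun b => RInt integrand 0 b) 0).
  - apply filter_forall. intro y. exact (RInt_correct _ _ _ (ex_RInt_integrand _ _)).
  - apply integrand_continuous.
Qed.

(* The choice in [am] is forced because [ellF k] is injective. *)
Lemma am_ellF p : am k (ellF k p) = p.
Proof. apply ellF_injective. unfold am. apply epsilon_spec. exists p. reflexivity. Qed.

Lemma ellF_quarter_surjective x :
  0 < x < ellK k -> exists p, 0 < p < PI / 2 /\ ellF k p = x.
Proof.
  intro hx. unfold ellK in hx. pose proof PI_RGT_0.
  destruct (IVT_gen (ellF k) 0 (PI / 2) x ellF_continuous) as [p [hp <-]].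
  { rewrite ellF_0, Rmin_left, Rmax_right; lra. }
  rewrite Rmin_left, Rmax_right in hp by lra.
  exists p. split; [|reflexivity].
  split; apply Rnot_le_lt; intros [h|h];
    try apply ellF_increasing in h; subst; rewrite ?ellF_0 in *; lra.
Qed.

Lemma ellF_quarter_range p : 0 < p < PI / 2 -> 0 < ellF k p < ellK k.
Proof.
  intro hp. rewrite <- ellF_0. unfold ellK. split; apply ellF_increasing; lra.
Qed.

Lemma sn_cn_quarter_bounds x :
  0 < x < ellK k -> 0 < sn k x < 1 /\ 0 < cn k x.
Proof.
  intro hx. destruct (ellF_quarter_surjective x hx) as [p [hp <-]].
  unfold sn, cn. rewrite am_ellF. now apply sin_cos_quarter_bounds.
Qed.

Lemma sn_quarter_exists_unique s :
  0 < s < 1 -> exists! x, 0 < x < ellK k /\ sn k x = s.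
Proof.
  intro hs. destruct (sin_quarter_exists_unique s hs) as [p [[hp hsp] hpu]].
  exists (ellF k p). split.
  - split; [now apply ellF_quarter_range|]. unfold sn. now rewrite am_ellF.
  - intros y [hy hsy]. destruct (ellF_quarter_surjective y hy) as [q [hq <-]].
    unfold sn in hsy. rewrite am_ellF in hsy. f_equal. now apply hpu.
Qed.

Lemma jacobi_equation_iff_sn x : 0 < x < ellK k ->
  kprime k * sc k x - dc k x + 2 * kprime k * nc k x = 0 <-> sn k x = 4 * k ^ 2 - 3.
Proof.
  intro hx. destruct (sn_cn_quarter_bounds x hx) as [hs hc].
  assert (hlhs : kprime k * sc k x - dc k x + 2 * kprime k * nc k x
                 = (kprime k * (sn k x + 2) - dn k x) * / cn k x).
  { unfold sc, dc, nc, Rdiv. ring. }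
  rewrite hlhs, <- kprime_mul_eq_sqrt_iff by lra. fold (dn k x).
  assert (/ cn k x <> 0) by (apply Rinv_neq_0_compat; lra).
  split; intro h.
  - apply Rmult_integral in h. lra.
  - rewrite h. ring.
Qed.

End Amplitude.

Theorem mainTheorem13 (k : R) (hk : 0 <= k < 1) :
  ((exists! x : R, 0 < x < ellK k /\
      kprime k * sc k x - dc k x + 2 * kprime k * nc k x = 0)
    <-> sqrt 3 / 2 < k < 1)
  /\
  (~ (sqrt 3 / 2 < k < 1) ->
     ~ (exists x : R, 0 < x < ellK k /\
      kprime k * sc k x - dc k x + 2 * kprime k * nc k x = 0)).
Proof.
  assert (hk2 : k ^ 2 < 1) by nra.
  pose proof (sqrt3_half_lt_iff k (proj1 hk)) as hthreshold.
  assert (necessary : (exists x, 0 < x < ellK k /\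
      kprime k * sc k x - dc k x + 2 * kprime k * nc k x = 0) -> sqrt 3 / 2 < k < 1).
  { intros [x [hx heq]]. apply (jacobi_equation_iff_sn k hk2 x hx) in heq.
    destruct (sn_cn_quarter_bounds k hk2 x hx) as [hs _]. lra. }
  split; [split|].
  - intros [x [hx _]]. apply necessary. now exists x.
  - intro hk3. assert (hs : 0 < 4 * k ^ 2 - 3 < 1) by lra.
    destruct (sn_quarter_exists_unique k hk2 _ hs) as [x [[hx hsx] hxu]].
    exists x. split.
    + split; [exact hx|]. now apply jacobi_equation_iff_sn.
    + intros y [hy heq]. apply hxu. split; [exact hy|].
      now apply (jacobi_equation_iff_sn k hk2 y hy).
  - intros hn hex. exact (hn (necessary hex)).
Qed.
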